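(* Let $L\ge 2$ and let $f_{i,j}:\mathbb{R}\to\mathbb{R}$, $i,j=0,\ldots,L-1$, be continuous $1$-periodic functions. For each $i$ and $\boldsymbol{y}=(y_0,\ldots,y_{L-1})\in\mathbb{R}^L$ define $$g_i(\boldsymbol{y}) := \int_{[0,1]^L} \prod_{j=0}^{L-1} f_{i,j}\bigl(x_j - x_{j+1} + y_j\bigr)\,\mathrm{d}\boldsymbol{x},\qquad x_L\equiv x_0.$$ Let $$\mathcal{I} := \int_{[0,1]^L}\cdots\int_{[0,1]^L} \prod_{i=0}^{L-1} g_i\bigl(\boldsymbol{y}_{i+1}-\boldsymbol{y}_i\bigr)\,\mathrm{d}\boldsymbol{y}_0\cdots\mathrm{d}\boldsymbol{y}_{L-1},$$ where each $\boldsymbol{y}_i\in[0,1]^L$ and $\boldsymbol{y}_L\equiv\boldsymbol{y}_0$. Then $$\mathcal{I} = \int_{[0,1]^L} \prod_{i=0}^{L-1} g_i\bigl(y_{i+1}-y_i,\,0,\ldots,0\bigr)\,\mathrm{d}\boldsymbol{y},$$ where now $\boldsymbol{y}=(y_0,\ldots,y_{L-1})\in[0,1]^L$ with scalar components and $y_L\equiv y_0$.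
   Context: Indices of integration variables are taken modulo $L$ (periodic boundary conditions). *)

From Stdlib Require Import Reals Arith.
From Coquelicot Require Import Coquelicot.
Open Scope R_scope.

Fixpoint prodR (n : nat) (h : nat -> R) : R :=
  match n with
  | O => 1
  | S n' => prodR n' h * h n'
  end.

(* Integral over the unit cube [0,1]^n of F, where a point of the cube is a
   vector x : nat -> R whose coordinates x 0, ..., x (n-1) range over [0,1]
   (coordinates >= n are fixed to 0).  It is computed as the iterated
   Riemann integral (Coquelicot RInt), one coordinate at a time; for the
   continuous integrands considered here this equals the Lebesgue integral
   over the cube (Fubini). *)
Fixpoint cube_int (n : nat) (F : (nat -> R) -> R) : R :=
  match n with
  | O => F (fun _ => 0)
  | S n' => RInt (fun t => cube_int n' (fun x => F (fun k => if Nat.eqb k n' then t else x k))) 0 1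
  end.

Definition gfun (L : nat) (f : nat -> nat -> R -> R) (i : nat) (y : nat -> R) : R :=
  cube_int L (fun x =>
    prodR L (fun j => f i j (x j - x (Nat.modulo (j + 1)%nat L) + y j))).

(* The L vectors y_0, ..., y_{L-1} in [0,1]^L are packed into one point z of
   [0,1]^(L*L): component k of y_i is z (i*L + k). *)
Definition block (L : nat) (z : nat -> R) (i : nat) : nat -> R :=
  fun k => z (i * L + k)%nat.

Definition Ical (L : nat) (f : nat -> nat -> R -> R) : R :=
  cube_int (L * L)%nat (fun z =>
    prodR L (fun i => gfun L f i
      (fun k => block L z (Nat.modulo (i + 1)%nat L) k - block L z i k))).

Definition first_only (t : R) : nat -> R :=
  fun k => if Nat.eqb k 0 then t else 0.

(* Shifting the integration variables x_j of g_i by partial sums of y shows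
   that g_i(y) depends on y only through s = y_0 + ... + y_{L-1}, so that
   g_i(y) = G_i(s) with G_i(s) := g_i(s, 0, ..., 0) continuous and 1-periodic.
   The integrand of I therefore depends on each block y_i only through the sum
   of its components, and a sum of independent uniform variables is uniform
   modulo 1: integrating out a block whose sum enters a 1-periodic function
   gives the same as integrating that function over one scalar y_i in [0,1].
   Continuity of all parameter integrals comes from uniform continuity of
   the integrands, which holds because the f_{i,j} are continuous and
   periodic. *)

From Stdlib Require Import Reals Arith Lia Lra ZArith FunctionalExtensionality.
From Coquelicot Require Import Coquelicot.
Open Scope R_scope.

Definition periodic (g : R -> R) : Prop := forall x, g (x + 1) = g x.

Lemma periodic_sub1 (g : R -> R) : periodic g -> forall x, g (x - 1) = g x.
Proof. intros Hg x. rewrite <- (Hg (x - 1)). f_equal; ring. Qed.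

Lemma periodic_INR (g : R -> R) : periodic g -> forall n x, g (x + INR n) = g x.
Proof.
  intros Hg n; induction n as [|n IH]; intro x.
  - simpl; f_equal; ring.
  - rewrite S_INR, <- Rplus_assoc, Hg. apply IH.
Qed.

Lemma periodic_IZR (g : R -> R) : periodic g -> forall z x, g (x + IZR z) = g x.
Proof.
  intros Hg z x. destruct z as [|p|p].
  - simpl; f_equal; ring.
  - rewrite <- Znat.positive_nat_Z, <- INR_IZR_INZ. apply periodic_INR, Hg.
  - rewrite IZR_NEG, <- Znat.positive_nat_Z, <- INR_IZR_INZ.
    rewrite <- (periodic_INR g Hg (Pos.to_nat p) (x + - _)). f_equal; ring.
Qed.

Lemma IZR_shift_unit_interval (a : R) : exists z, 0 <= a + IZR z <= 1.
Proof.
  exists (- Int_part a)%Z. rewrite opp_IZR. destruct (base_Int_part a). lra.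
Qed.

Definition unif_cont1 (g : R -> R) : Prop := forall eps, 0 < eps -> exists d, 0 < d /\
  forall a b, Rabs (a - b) < d -> Rabs (g a - g b) < eps.

Definition bounded1 (g : R -> R) : Prop := exists M, forall a, Rabs (g a) <= M.

Lemma continuous_continuity_pt (g : R -> R) x : continuous g x -> continuity_pt g x.
Proof. apply continuity_pt_filterlim. Qed.

Lemma periodic_unif_cont1 (g : R -> R) :
  (forall x, continuous g x) -> periodic g -> unif_cont1 g.
Proof.
  intros Hc Hp eps Heps.
  destruct (Heine g (fun c => -1 <= c <= 2) (compact_P3 (-1) 2)
    (fun x _ => continuous_continuity_pt g x (Hc x)) (mkposreal eps Heps)) as [[d Hd] H].
  exists (Rmin d 1). split; [apply Rmin_case; lra|].
  intros a b Hab. destruct (IZR_shift_unit_interval a) as [z Hz].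
  rewrite <- (periodic_IZR g Hp z a), <- (periodic_IZR g Hp z b).
  assert (Hd' : Rabs (a - b) < d) by (eapply Rlt_le_trans; [exact Hab | apply Rmin_l]).
  assert (H1 : Rabs (a - b) < 1) by (eapply Rlt_le_trans; [exact Hab | apply Rmin_r]).
  apply Rabs_lt_between in H1.
  apply H; simpl; [lra | lra |].
  replace (a + IZR z - (b + IZR z)) with (a - b) by ring. exact Hd'.
Qed.

Lemma periodic_bounded1 (g : R -> R) :
  (forall x, continuous g x) -> periodic g -> bounded1 g.
Proof.
  intros Hc Hp.
  destruct (continuity_ab_maj (fun x => Rabs (g x)) 0 1) as [M [HM _]]; [lra| |].
  { intros c _. apply (continuity_pt_comp g Rabs).
    - apply continuous_continuity_pt, Hc.
    - apply Rcontinuity_abs. }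
  exists (Rabs (g M)). intro a. destruct (IZR_shift_unit_interval a) as [z Hz].
  rewrite <- (periodic_IZR g Hp z a). apply HM, Hz.
Qed.

Lemma continuous_eps_delta (g : R -> R) x :
  (forall eps, 0 < eps -> exists d, 0 < d /\
     forall y, Rabs (y - x) < d -> Rabs (g y - g x) < eps) ->
  continuous g x.
Proof.
  intro H. apply filterlim_locally. intros [e He].
  destruct (H e He) as [d [Hd Hy]]. exists (mkposreal d Hd). intros y Hb. apply Hy, Hb.
Qed.

Lemma ex_RInt_cont (H : R -> R) a b : (forall x, continuous H x) -> ex_RInt H a b.
Proof. intro Hc. apply (ex_RInt_continuous (V := R_CompleteNormedModule)); auto. Qed.

Lemma RInt_translate (H : R -> R) a b c : (forall x, continuous H x) ->
  RInt (fun t => H (t + c)) a b = RInt H (a + c) (b + c).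
Proof.
  intro Hc.
  transitivity (RInt (fun t => scal 1 (H (1 * t + c))) a b).
  { apply RInt_ext. intros t _.
    unfold scal; simpl; unfold mult; simpl. rewrite !Rmult_1_l. reflexivity. }
  rewrite (RInt_comp_lin (V := R_CompleteNormedModule)) by apply ex_RInt_cont, Hc.
  f_equal; ring.
Qed.

Lemma RInt_periodic_translate (H : R -> R) c :
  (forall x, continuous H x) -> periodic H ->
  RInt (fun t => H (t + c)) 0 1 = RInt H 0 1.
Proof.
  intros Hc Hp.
  assert (Hex : forall a b, ex_RInt H a b) by (intros; apply ex_RInt_cont, Hc).
  assert (Hone : RInt H 1 (1 + c) = RInt H 0 c).
  { transitivity (RInt (fun t => H (t + 1)) 0 c).
    - rewrite RInt_translate by exact Hc. f_equal; ring.
    - apply RInt_ext. intros t _. apply Hp. }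
  rewrite RInt_translate by exact Hc. rewrite Rplus_0_l.
  rewrite <- (RInt_Chasles (V := R_CompleteNormedModule) H c 1 (1 + c)) by apply Hex.
  rewrite <- (RInt_Chasles (V := R_CompleteNormedModule) H 0 c 1) by apply Hex.
  rewrite (Rplus_comm 1 c), <- (Rplus_comm 1 c), Hone.
  unfold plus; simpl. ring.
Qed.

Definition close (x y : nat -> R) (d : R) : Prop := forall k, Rabs (x k - y k) < d.

Definition unif_cont (F : (nat -> R) -> R) : Prop := forall eps, 0 < eps -> exists d, 0 < d /\
  forall x y, close x y d -> Rabs (F x - F y) < eps.

Definition bounded (F : (nat -> R) -> R) : Prop := exists M, forall x, Rabs (F x) <= M.

Definition lipschitz (phi : (nat -> R) -> R) (K : R) : Prop :=
  forall x y d, close x y d -> Rabs (phi x - phi y) <= K * d.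

Definition upd (x : nat -> R) (n : nat) (t : R) : nat -> R :=
  fun k => if Nat.eqb k n then t else x k.

Lemma upd_same x n t : upd x n t n = t.
Proof. unfold upd. rewrite Nat.eqb_refl. reflexivity. Qed.

Lemma upd_other x n t k : k <> n -> upd x n t k = x k.
Proof. intro H. unfold upd. destruct (Nat.eqb_spec k n); [lia | reflexivity]. Qed.

Lemma upd_upd x n a b : upd (upd x n a) n b = upd x n b.
Proof. apply functional_extensionality. intro k. unfold upd. destruct (Nat.eqb k n); auto. Qed.

Lemma upd_comm x k n a b : k <> n -> upd (upd x k a) n b = upd (upd x n b) k a.
Proof.
  intro H. apply functional_extensionality. intro j. unfold upd.
  destruct (Nat.eqb_spec j n), (Nat.eqb_spec j k); auto. lia.
Qed.

Lemma close_pos x y d : close x y d -> 0 < d.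
Proof. intro H. specialize (H O). pose proof (Rabs_pos (x O - y O)). lra. Qed.

Lemma close_upd x y d n t : close x y d -> close (upd x n t) (upd y n t) d.
Proof.
  intros H k. unfold upd. destruct (Nat.eqb k n); [|apply H].
  rewrite Rminus_diag, Rabs_R0. eapply close_pos, H.
Qed.

Lemma unif_cont_upd F n t : unif_cont F -> unif_cont (fun x => F (upd x n t)).
Proof.
  intros H eps He. destruct (H eps He) as [d [Hd K]].
  exists d. split; [exact Hd|]. intros x y Hxy. apply K, close_upd, Hxy.
Qed.

Lemma lipschitz_affine phi a b n e c : Rabs e <= 1 ->
  (forall x, phi x = x a - x b + e * x n + c) -> lipschitz phi 3.
Proof.
  intros He Hphi x y d Hxy. rewrite !Hphi.
  replace (x a - x b + e * x n + c - (y a - y b + e * y n + c)) with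
    ((x a - y a) - (x b - y b) + e * (x n - y n)) by ring.
  pose proof (Hxy a). pose proof (Hxy b). pose proof (Hxy n).
  assert (Rabs e * Rabs (x n - y n) <= 1 * d)
    by (apply Rmult_le_compat; try apply Rabs_pos; lra).
  eapply Rle_trans; [apply Rabs_triang|]. rewrite Rabs_mult.
  eapply Rle_trans; [apply Rplus_le_compat_r, Rabs_triang|]. rewrite Rabs_Ropp. lra.
Qed.

Lemma unif_cont_comp (g : R -> R) phi K : 0 < K ->
  unif_cont1 g -> lipschitz phi K -> unif_cont (fun x => g (phi x)).
Proof.
  intros HK Hg Hphi eps He. destruct (Hg eps He) as [d [Hd H]].
  exists (d / (2 * K)). split; [apply Rdiv_lt_0_compat; lra|].
  intros x y Hxy. apply H. specialize (Hphi x y _ Hxy).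
  replace (K * (d / (2 * K))) with (d / 2) in Hphi by (field; lra). lra.
Qed.

Lemma bounded_comp (g : R -> R) phi : bounded1 g -> bounded (fun x => g (phi x)).
Proof. intros [M HM]. exists M. intro x. apply HM. Qed.

Lemma bounded_nonneg (F : (nat -> R) -> R) M : (forall x, Rabs (F x) <= M) -> 0 <= M.
Proof. intro H. eapply Rle_trans; [apply Rabs_pos | apply (H (fun _ => 0))]. Qed.

Lemma bounded_mul (F G : (nat -> R) -> R) : bounded F -> bounded G -> bounded (fun x => F x * G x).
Proof.
  intros [M1 H1] [M2 H2]. exists (M1 * M2). intro x. rewrite Rabs_mult.
  apply Rmult_le_compat; try apply Rabs_pos; auto.
Qed.

Lemma unif_cont_mul (F G : (nat -> R) -> R) :
  unif_cont F -> bounded F -> unif_cont G -> bounded G ->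
  unif_cont (fun x => F x * G x).
Proof.
  intros HF [M1 H1] HG [M2 H2] eps He.
  pose proof (bounded_nonneg F M1 H1). pose proof (bounded_nonneg G M2 H2).
  set (e := eps / (M1 + M2 + 1)).
  assert (He' : 0 < e) by (apply Rdiv_lt_0_compat; lra).
  assert (Hsum : M1 * e + M2 * e < eps).
  { replace (M1 * e + M2 * e) with (eps - e) by (unfold e; field; lra). lra. }
  destruct (HF e He') as [d1 [Hd1 K1]]. destruct (HG e He') as [d2 [Hd2 K2]].
  exists (Rmin d1 d2). split; [apply Rmin_case; lra|].
  intros x y Hxy.
  assert (C1 : Rabs (F x - F y) < e)
    by (apply K1; intro k; eapply Rlt_le_trans; [apply Hxy | apply Rmin_l]).
  assert (C2 : Rabs (G x - G y) < e)
    by (apply K2; intro k; eapply Rlt_le_trans; [apply Hxy | apply Rmin_r]).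
  replace (F x * G x - F y * G y) with (F x * (G x - G y) + G y * (F x - F y)) by ring.
  eapply Rle_lt_trans; [apply Rabs_triang|]. rewrite !Rabs_mult.
  assert (Rabs (F x) * Rabs (G x - G y) <= M1 * e)
    by (apply Rmult_le_compat; try apply Rabs_pos; auto; lra).
  assert (Rabs (G y) * Rabs (F x - F y) <= M2 * e)
    by (apply Rmult_le_compat; try apply Rabs_pos; auto; lra).
  lra.
Qed.

Lemma prodR_ext n h h' : (forall j, (j < n)%nat -> h j = h' j) -> prodR n h = prodR n h'.
Proof. induction n as [|n IH]; intro H; simpl; auto. rewrite IH, H; auto. Qed.

Lemma unif_cont_prodR n (h : nat -> (nat -> R) -> R) :
  (forall j, (j < n)%nat -> unif_cont (h j) /\ bounded (h j)) ->
  unif_cont (fun x => prodR n (fun j => h j x)) /\ bounded (fun x => prodR n (fun j => h j x)).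
Proof.
  induction n as [|n IH]; intro H; simpl.
  - split.
    + intros eps He. exists 1. split; [lra|]. intros. rewrite Rminus_diag, Rabs_R0. exact He.
    + exists 1. intro. rewrite Rabs_R1. lra.
  - destruct IH as [U B]; [intros j Hj; apply H; lia|].
    destruct (H n ltac:(lia)) as [Un Bn].
    split; [apply unif_cont_mul | apply bounded_mul]; auto.
Qed.

Lemma cube_int_ext n F G : (forall x, F x = G x) -> cube_int n F = cube_int n G.
Proof. intro H. replace G with F; [reflexivity|]. apply functional_extensionality, H. Qed.

Lemma cube_int_S n F :
  cube_int (S n) F = RInt (fun t => cube_int n (fun x => F (upd x n t))) 0 1.
Proof. reflexivity. Qed.

Definition cube_int_sup_bound (n : nat) : Prop :=
  forall F G eps, unif_cont F -> unif_cont G -> (forall x, Rabs (F x - G x) <= eps) ->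
  Rabs (cube_int n F - cube_int n G) <= eps.

Lemma cube_int_upd_continuous_of_bound n : cube_int_sup_bound n ->
  forall F m, unif_cont F -> forall s, continuous (fun t => cube_int n (fun x => F (upd x m t))) s.
Proof.
  intros B F m HF s. apply continuous_eps_delta. intros eps He.
  destruct (HF (eps / 2) ltac:(lra)) as [d [Hd K]]. exists d. split; [exact Hd|].
  intros t Ht. apply Rle_lt_trans with (eps / 2); [|lra].
  apply B; try apply unif_cont_upd; auto.
  intro x. left. apply K. intro k. unfold upd. destruct (Nat.eqb k m); [exact Ht|].
  rewrite Rminus_diag, Rabs_R0. exact Hd.
Qed.

Lemma cube_int_sup_bound_all n : cube_int_sup_bound n.
Proof.
  induction n as [|n IH]; intros F G eps HF HG H; [apply H|].
  rewrite !cube_int_S.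
  assert (Hex : forall F', unif_cont F' ->
            ex_RInt (fun t => cube_int n (fun x => F' (upd x n t))) 0 1).
  { intros F' HF'. apply ex_RInt_cont. apply cube_int_upd_continuous_of_bound; auto. }
  change (Rabs (minus (RInt (fun t => cube_int n (fun x => F (upd x n t))) 0 1)
                      (RInt (fun t => cube_int n (fun x => G (upd x n t))) 0 1)) <= eps).
  rewrite <- (RInt_minus (V := R_CompleteNormedModule)) by auto.
  replace eps with ((1 - 0) * eps) by ring.
  apply abs_RInt_le_const; [lra | apply (ex_RInt_minus (V := R_CompleteNormedModule)); auto|].
  intros t _. apply IH; try apply unif_cont_upd; auto.
Qed.

Lemma cube_int_upd_continuous n F m : unif_cont F ->
  forall s, continuous (fun t => cube_int n (fun x => F (upd x m t))) s.
Proof. apply cube_int_upd_continuous_of_bound, cube_int_sup_bound_all. Qed.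

Definition periodic_in (F : (nat -> R) -> R) (n : nat) : Prop :=
  forall x k, (k < n)%nat -> F (upd x k (x k + 1)) = F x.

Definition depends_only_on (F : (nat -> R) -> R) (n : nat) : Prop :=
  forall x x', (forall k, (k < n)%nat -> x k = x' k) -> F x = F x'.

Lemma periodic_in_upd (F : (nat -> R) -> R) n t :
  periodic_in F (S n) -> periodic_in (fun x => F (upd x n t)) n.
Proof.
  intros HF x k Hk. rewrite upd_comm by lia. rewrite <- (HF (upd x n t) k) by lia.
  rewrite upd_other by lia. reflexivity.
Qed.

Lemma cube_int_upd_periodic n (F : (nat -> R) -> R) :
  periodic_in F (S n) -> periodic (fun t => cube_int n (fun x => F (upd x n t))).
Proof.
  intros HF t. apply cube_int_ext. intro x.
  rewrite <- (HF (upd x n t) n) by lia. rewrite upd_same, upd_upd. reflexivity.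
Qed.

Definition shift (n : nat) (c x : nat -> R) : nat -> R :=
  fun k => if Nat.ltb k n then x k + c k else x k.

Lemma cube_int_shift n : forall F c, unif_cont F -> periodic_in F n ->
  cube_int n (fun x => F (shift n c x)) = cube_int n F.
Proof.
  induction n as [|n IH]; intros F c HU HP; [reflexivity|].
  rewrite !cube_int_S.
  transitivity (RInt (fun t => cube_int n (fun x => F (upd x n (t + c n)))) 0 1).
  2: exact (RInt_periodic_translate _ (c n) (cube_int_upd_continuous n F n HU)
             (cube_int_upd_periodic n F HP)).
  apply RInt_ext. intros t _.
  rewrite <- (IH (fun y => F (upd y n (t + c n))) c (unif_cont_upd F n _ HU)
                (periodic_in_upd F n _ HP)).
  apply cube_int_ext. intro x. f_equal. apply functional_extensionality. intro k.
  unfold shift, upd.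
  destruct (Nat.eqb_spec k n), (Nat.ltb_spec k (S n)), (Nat.ltb_spec k n);
    subst; auto; try lia; ring.
Qed.

Lemma cube_int_ext_vanishing n : forall F G,
  (forall x, (forall k, (n <= k)%nat -> x k = 0) -> F x = G x) ->
  cube_int n F = cube_int n G.
Proof.
  induction n as [|n IH]; intros F G H; simpl.
  - apply H. auto.
  - apply RInt_ext. intros t _. apply IH. intros x Hx. apply H. intros k Hk.
    destruct (Nat.eqb_spec k n); [lia|]. apply Hx. lia.
Qed.

Definition glue (a : nat) (x w : nat -> R) : nat -> R :=
  fun k => if Nat.ltb k a then x k else w (k - a)%nat.

Lemma cube_int_add a b : forall F,
  cube_int (a + b) F = cube_int b (fun w => cube_int a (fun x => F (glue a x w))).
Proof.
  induction b as [|b IH]; intro F.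
  - rewrite Nat.add_0_r. simpl. apply cube_int_ext_vanishing. intros x Hx. f_equal.
    apply functional_extensionality. intro k. unfold glue.
    destruct (Nat.ltb_spec k a); auto.
  - rewrite Nat.add_succ_r. simpl. apply RInt_ext. intros t _. rewrite IH.
    apply cube_int_ext. intro w. apply cube_int_ext. intro x. f_equal.
    apply functional_extensionality. intro k. unfold glue.
    destruct (Nat.ltb_spec k a), (Nat.eqb_spec k (a + b)), (Nat.eqb_spec (k - a) b);
      auto; lia.
Qed.

Fixpoint sumR (n : nat) (h : nat -> R) : R :=
  match n with
  | O => 0
  | S n' => sumR n' h + h n'
  end.

Lemma sumR_ext n h h' : (forall k, (k < n)%nat -> h k = h' k) -> sumR n h = sumR n h'.
Proof. induction n as [|n IH]; intro H; simpl; auto. rewrite IH, H; auto. Qed.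

Lemma sumR_minus n h h' : sumR n (fun k => h k - h' k) = sumR n h - sumR n h'.
Proof. induction n as [|n IH]; simpl; [ring|]. rewrite IH. ring. Qed.

Lemma cube_int_periodic_sum n : forall (H : R -> R) c,
  (forall s, continuous H s) -> periodic H ->
  cube_int (S n) (fun w => H (c + sumR (S n) w)) = RInt H 0 1.
Proof.
  induction n as [|n IH]; intros H c Hc Hp.
  - rewrite <- (RInt_periodic_translate H c Hc Hp).
    apply RInt_ext. intros t _. simpl. f_equal. ring.
  - rewrite cube_int_S. transitivity (RInt (fun _ => RInt H 0 1) 0 1).
    + apply RInt_ext. intros t _. rewrite <- (IH H (c + t) Hc Hp).
      apply cube_int_ext. intro x. f_equal.
      change (c + (sumR (S n) (upd x (S n) t) + upd x (S n) t (S n))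
              = c + t + sumR (S n) x).
      rewrite upd_same, (sumR_ext _ _ x) by (intros; apply upd_other; lia). ring.
    + rewrite RInt_const. unfold scal; simpl; unfold mult; simpl. ring.
Qed.

Definition block_sums (L : nat) (z : nat -> R) : nat -> R :=
  fun i => sumR L (block L z i).

Lemma cube_int_block_sums L m : (0 < L)%nat -> forall Psi,
  unif_cont Psi -> periodic_in Psi m -> depends_only_on Psi m ->
  cube_int (m * L) (fun z => Psi (block_sums L z)) = cube_int m Psi.
Proof.
  intro HL. induction m as [|m IH]; intros Psi HU HP HD.
  - apply HD. intros; lia.
  - replace (S m * L)%nat with (m * L + L)%nat by lia. rewrite cube_int_add.
    destruct L as [|L']; [lia|].
    transitivity
      (cube_int (S L') (fun w => cube_int m (fun y => Psi (upd y m (0 + sumR (S L') w))))).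
    2: exact (cube_int_periodic_sum L' _ 0 (cube_int_upd_continuous m Psi m HU)
               (cube_int_upd_periodic m Psi HP)).
    apply cube_int_ext. intro w.
    rewrite <- (IH (fun y => Psi (upd y m (0 + sumR (S L') w)))
                  (unif_cont_upd Psi m _ HU) (periodic_in_upd Psi m _ HP)).
    2: { intros y y' Hy. apply HD. intros i Hi. unfold upd.
         destruct (Nat.eqb_spec i m); auto. apply Hy. lia. }
    apply cube_int_ext. intro x. apply HD. intros i Hi. unfold block_sums, block, upd.
    destruct (Nat.eqb_spec i m).
    + subst. rewrite Rplus_0_l. apply sumR_ext. intros k Hk. unfold glue.
      destruct (Nat.ltb_spec (m * S L' + k) (m * S L')); [lia|]. f_equal. lia.
    + apply sumR_ext. intros k Hk. unfold glue.
      destruct (Nat.ltb_spec (i * S L' + k) (m * S L')); auto. nia.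
Qed.

Lemma periodic_comp_regular (g : R -> R) phi K : 0 < K ->
  (forall x, continuous g x) -> periodic g -> lipschitz phi K ->
  unif_cont (fun x => g (phi x)) /\ bounded (fun x => g (phi x)).
Proof.
  intros HK Hc Hp Hphi. split.
  - apply (unif_cont_comp g phi K HK); [apply periodic_unif_cont1 | ]; auto.
  - apply bounded_comp, periodic_bounded1; auto.
Qed.

Lemma periodic_diff_upd (g : R -> R) : periodic g ->
  forall x k a b, g (upd x k (x k + 1) a - upd x k (x k + 1) b) = g (x a - x b).
Proof.
  intros Hp x k a b. unfold upd.
  destruct (Nat.eqb_spec a k), (Nat.eqb_spec b k); subst.
  - f_equal; ring.
  - rewrite <- (Hp (x k - x b)). f_equal; ring.
  - rewrite <- (periodic_sub1 g Hp (x a - x k)). f_equal; ring.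
  - reflexivity.
Qed.

Section CyclicIntegral.

Variable L : nat.
Hypothesis L_pos : (0 < L)%nat.
Variable h : nat -> R -> R.
Hypothesis h_cont : forall j, (j < L)%nat -> forall x, continuous (h j) x.
Hypothesis h_per : forall j, (j < L)%nat -> periodic (h j).

Lemma succ_mod_lt j : (Nat.modulo (j + 1) L < L)%nat.
Proof. apply Nat.mod_upper_bound. lia. Qed.

Definition cyclic_integrand (y x : nat -> R) : R :=
  prodR L (fun j => h j (x j - x (Nat.modulo (j + 1) L) + y j)).

Definition cyclic_integral (y : nat -> R) : R := cube_int L (cyclic_integrand y).

Lemma cyclic_integrand_unif_cont y : unif_cont (cyclic_integrand y).
Proof.
  apply (unif_cont_prodR L (fun j x => h j (x j - x (Nat.modulo (j + 1) L) + y j))).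
  intros j Hj. apply (periodic_comp_regular _ _ 3); auto; [lra|].
  apply (lipschitz_affine _ j (Nat.modulo (j + 1) L) O 0 (y j)); [rewrite Rabs_R0; lra|].
  intro; ring.
Qed.

Lemma cyclic_integrand_periodic_in y : periodic_in (cyclic_integrand y) L.
Proof.
  intros x k Hk. apply prodR_ext. intros j Hj.
  apply (periodic_diff_upd (fun s => h j (s + y j))). intro s.
  rewrite <- (h_per j Hj (s + y j)). f_equal; ring.
Qed.

Lemma cyclic_integral_sum y : cyclic_integral y = cyclic_integral (first_only (sumR L y)).
Proof.
  (* Shifting x_j by c_j turns the argument y_j into y_j + c_j - c_{j+1},
     which is sumR L y for j = 0 and 0 otherwise. *)
  set (c := fun j => if Nat.eqb j 0 then 0 else sumR j y - sumR L y).
  unfold cyclic_integral.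
  rewrite <- (cube_int_shift L (cyclic_integrand y) c
                (cyclic_integrand_unif_cont y) (cyclic_integrand_periodic_in y)).
  apply cube_int_ext. intro x. apply prodR_ext. intros j Hj. f_equal.
  pose proof (succ_mod_lt j) as Hm. unfold shift.
  destruct (Nat.ltb_spec j L); [|lia]. destruct (Nat.ltb_spec ((j + 1) mod L) L); [|lia].
  unfold c, first_only.
  destruct (Nat.eq_dec (j + 1) L) as [E|E].
  - rewrite E, Nat.Div0.mod_same. simpl. replace L with (S j) by lia.
    destruct (Nat.eqb_spec j 0); [subst|]; simpl; ring.
  - rewrite Nat.mod_small by lia.
    destruct (Nat.eqb_spec j 0), (Nat.eqb_spec (j + 1) 0); try lia.
    + subst. simpl. ring.
    + replace (j + 1)%nat with (S j) by lia. simpl. ring.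
Qed.

Lemma cyclic_integral_first_periodic : periodic (fun s => cyclic_integral (first_only s)).
Proof.
  intro s. apply cube_int_ext. intro x. apply prodR_ext. intros j Hj.
  unfold first_only. destruct (Nat.eqb j 0); [|reflexivity].
  rewrite <- (h_per j Hj (_ + s)). f_equal; ring.
Qed.

Lemma cyclic_integral_first_continuous s :
  continuous (fun s => cyclic_integral (first_only s)) s.
Proof.
  (* The parameter s is stored as the extra coordinate L of the cube variable. *)
  set (Q := fun w => cyclic_integrand (first_only (w L)) w).
  apply (continuous_ext (fun t => cube_int L (fun x => Q (upd x L t)))).
  { intro t. apply cube_int_ext. intro x.
    unfold Q. rewrite upd_same. apply prodR_ext. intros j Hj.
    pose proof (succ_mod_lt j). rewrite !upd_other by lia. reflexivity. }
  apply cube_int_upd_continuous.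
  apply (unif_cont_prodR L
           (fun j w => h j (w j - w (Nat.modulo (j + 1) L) + first_only (w L) j))).
  intros j Hj. apply (periodic_comp_regular _ _ 3); auto; [lra|].
  apply (lipschitz_affine _ j (Nat.modulo (j + 1) L) L (if Nat.eqb j 0 then 1 else 0) 0).
  - destruct (Nat.eqb j 0); [rewrite Rabs_R1 | rewrite Rabs_R0]; lra.
  - intro w. unfold first_only. destruct (Nat.eqb j 0); ring.
Qed.

End CyclicIntegral.

Section CyclicDifferences.

Variable L : nat.
Hypothesis L_pos : (0 < L)%nat.
Variable G : nat -> R -> R.
Hypothesis G_cont : forall i, (i < L)%nat -> forall s, continuous (G i) s.
Hypothesis G_per : forall i, (i < L)%nat -> periodic (G i).

Definition cyclic_diff_product (y : nat -> R) : R :=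
  prodR L (fun i => G i (y (Nat.modulo (i + 1) L) - y i)).

Lemma cyclic_diff_product_unif_cont : unif_cont cyclic_diff_product.
Proof.
  apply (unif_cont_prodR L (fun i y => G i (y (Nat.modulo (i + 1) L) - y i))).
  intros i Hi. apply (periodic_comp_regular _ _ 3); auto; [lra|].
  apply (lipschitz_affine _ (Nat.modulo (i + 1) L) i O 0 0); [rewrite Rabs_R0; lra|].
  intro; ring.
Qed.

Lemma cyclic_diff_product_periodic_in : periodic_in cyclic_diff_product L.
Proof.
  intros y k Hk. apply prodR_ext. intros i Hi. apply periodic_diff_upd, G_per, Hi.
Qed.

Lemma cyclic_diff_product_depends : depends_only_on cyclic_diff_product L.
Proof.
  intros y y' H. apply prodR_ext. intros i Hi.
  pose proof (succ_mod_lt L L_pos i). rewrite !H; auto.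
Qed.

End CyclicDifferences.

Theorem lemma2 (L : nat) (f : nat -> nat -> R -> R) :
  (2 <= L)%nat ->
  (forall i j, (i < L)%nat -> (j < L)%nat -> forall x, continuous (f i j) x) ->
  (forall i j, (i < L)%nat -> (j < L)%nat -> forall x, f i j (x + 1) = f i j x) ->
  Ical L f =
  cube_int L (fun y =>
    prodR L (fun i => gfun L f i (first_only (y (Nat.modulo (i + 1)%nat L) - y i)))).
Proof.
  intros HL f_cont f_per.
  assert (L_pos : (0 < L)%nat) by lia.
  assert (f_periodic : forall i j, (i < L)%nat -> (j < L)%nat -> periodic (f i j))
    by exact f_per.
  set (G := fun i s => cyclic_integral L (f i) (first_only s)).
  assert (G_cont : forall i, (i < L)%nat -> forall s, continuous (G i) s)
    by (intros i Hi; apply cyclic_integral_first_continuous; auto).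
  assert (G_per : forall i, (i < L)%nat -> periodic (G i))
    by (intros i Hi; apply cyclic_integral_first_periodic; auto).
  change (Ical L f = cube_int L (cyclic_diff_product L G)).
  rewrite <- (cube_int_block_sums L L L_pos _
                (cyclic_diff_product_unif_cont L G G_cont G_per)
                (cyclic_diff_product_periodic_in L G G_per)
                (cyclic_diff_product_depends L L_pos G)).
  apply cube_int_ext. intro z. apply prodR_ext. intros i Hi.
  change (cyclic_integral L (f i) (fun k => block L z ((i + 1) mod L) k - block L z i k)
          = G i (block_sums L z ((i + 1) mod L) - block_sums L z i)).
  rewrite cyclic_integral_sum by auto. unfold G, block_sums. rewrite sumR_minus. reflexivity.
Qed.
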